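(* Let $R$ be a noetherian integral domain, $n\ge1$, $R[n]=R[t]/(t^n)$, and $M$ an $R[n]$-module of finite type. Then $M$ is torsion free if and only if it is isomorphic to a submodule of a free $R[n]$-module.
   Context: An element $u=\sum_{i=0}^{n-1}u_it^i\in R[n]$ ($u_i\in R$) is a non-zero-divisor iff $u_0\ne0$; let $S_n$ be the set of non-zero-divisors. The torsion submodule $T(M)$ of $M$ is the set of $m\in M$ such that $\alpha m=0$ for some $\alpha\in S_n$; $M$ is torsion free if $T(M)=0$. *)

From HB Require Import structures.
From mathcomp Require Import all_boot all_order all_algebra.
Set Implicit Arguments. Unset Strict Implicit. Unset Printing Implicit Defensive.
Import Order.TTheory GRing.Theory.
Local Open Scope ring_scope.

(* R[n] = R[t]/(t^n), realized with MathComp's quotient-by-a-monic-polynomial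
   ring {poly %/ h} (qpoly.v), with h = 'X^n (monic of size n+1 > 1 for n >= 1). *)
Definition trunc_poly (R : comNzRingType) (n : nat) : comNzRingType :=
  {poly %/ ('X^n : {poly R})}.

Definition is_ideal (R : comNzRingType) (I : {pred R}) : Prop :=
  [/\ 0 \in I,
      (forall x y, x \in I -> y \in I -> x + y \in I) &
      (forall a x, x \in I -> a * x \in I)].

Definition noetherian (R : comNzRingType) : Prop :=
  forall I : {pred R}, is_ideal I ->
    exists s : seq R, all (fun x => x \in I) s /\
      forall x, x \in I -> exists c : 'I_(size s) -> R,
        x = \sum_(i < size s) c i * s`_i.

Definition non_zero_divisor (A : comNzRingType) (a : A) : Prop :=
  forall b : A, a * b = 0 -> b = 0.

Definition torsion_free (A : comNzRingType) (M : lmodType A) : Prop :=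
  forall (a : A) (m : M), non_zero_divisor a -> a *: m = 0 -> m = 0.

Definition finite_type (A : comNzRingType) (M : lmodType A) : Prop :=
  exists s : seq M, forall m : M, exists c : 'I_(size s) -> A,
    m = \sum_(i < size s) c i *: s`_i.

Definition is_free_module (A : comNzRingType) (F : lmodType A) : Prop :=
  exists (I : eqType) (b : I -> F),
    (forall (s : seq I) (c : I -> A), uniq s ->
        \sum_(i <- s) c i *: b i = 0 -> forall i, i \in s -> c i = 0) /\
    (forall v : F, exists (s : seq I) (c : I -> A),
        v = \sum_(i <- s) c i *: b i).

Definition embeds_in_free (A : comNzRingType) (M : lmodType A) : Prop :=
  exists (F : lmodType A) (f : M -> F),
    [/\ is_free_module F, linear f & injective f].

(* Submodules of free modules are torsion free; the content is the converse.
   As an R-module M is finitely generated, so it contains an R-linearly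
   independent family e_1, ..., e_d and an r <> 0 with r M inside the span of
   the e_l, which yields R-linear coordinate functionals phi_l with
   r m = sum_l phi_l(m) e_l.  Since R[n] is a Frobenius R-algebra, an R-linear
   f : M -> R is the coefficient of t^(n-1) of the R[n]-linear map
   m |-> sum_i f(t^(n-1-i) m) t^i.  Lifting the phi_l in this way gives an
   R[n]-linear map M -> R[n]^d whose kernel is killed by r, which is a
   non-zero-divisor of R[n]; torsion freeness makes the map injective. *)

From HB Require Import structures.
From mathcomp Require Import all_boot all_order all_algebra.
From Stdlib Require Import Classical ClassicalEpsilon.
Set Implicit Arguments.
Unset Strict Implicit.
Unset Printing Implicit Defensive.
Import GRing.Theory.
Local Open Scope ring_scope.

Lemma sum_scale_undup (A : pzRingType) (F : lmodType A) (I : eqType)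
    (b : I -> F) (c : I -> A) (s : seq I) :
  \sum_(i <- s) c i *: b i = \sum_(i <- undup s) (c i *+ count_mem i s) *: b i.
Proof.
by rewrite -big_undup_iterop_count; apply: eq_bigr => i _; rewrite -scalerMnl.
Qed.

Lemma free_module_torsion_free (A : comNzRingType) (F : lmodType A) :
  is_free_module F -> torsion_free F.
Proof.
move=> [I [b [b_free b_span]]] a v a_nzd av0.
have [s [c v_def]] := b_span v.
rewrite v_def sum_scale_undup in av0 *.
have ac_rel : \sum_(i <- undup s) (a * (c i *+ count_mem i s)) *: b i = 0.
  by rewrite -[RHS]av0 scaler_sumr; apply: eq_bigr => i _; rewrite scalerA.
rewrite big1_seq // => i /andP[_ i_s].
by rewrite (a_nzd _ (b_free _ _ (undup_uniq s) ac_rel i i_s)) scale0r.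
Qed.

Lemma torsion_free_inj (A : comNzRingType) (M F : lmodType A) (f : M -> F) :
  linear f -> injective f -> torsion_free F -> torsion_free M.
Proof.
move=> f_lin f_inj F_tf a m a_nzd am0.
pose g : {linear M -> F} := HB.pack f (GRing.isLinear.Build _ _ _ _ f f_lin).
have f0 : f 0 = 0 := linear0 g.
have fZ : f (a *: m) = a *: f m := linearZZ g a m.
by apply: f_inj; rewrite f0; apply: (F_tf a) => //; rewrite -fZ am0.
Qed.

Lemma embeds_in_free_torsion_free (A : comNzRingType) (M : lmodType A) :
  embeds_in_free M -> torsion_free M.
Proof.
move=> [F [f [F_free f_lin f_inj]]].
exact: torsion_free_inj f_lin f_inj (free_module_torsion_free F_free).
Qed.

Lemma free_rV (A : comNzRingType) (d : nat) : is_free_module 'rV[A]_d.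
Proof.
exists ('I_d : eqType), (fun i => delta_mx 0 i); split.
  move=> s c s_uniq c_rel i i_s.
  have := congr1 (fun v : 'rV[A]_d => v 0 i) c_rel.
  rewrite summxE (bigD1_seq i) //= !mxE !eqxx mulr1 big1 ?addr0 ?mxE // => j ji.
  by rewrite !mxE eq_sym (negbTE ji) andbF mulr0.
by move=> v; exists (index_enum 'I_d), (fun j => v 0 j); apply: row_sum_delta.
Qed.

Definition restrict_scalars (R : pzRingType) (A : lalgType R) (M : lmodType A)
  : Type := M.

Section RestrictScalars.
Variables (R : pzRingType) (A : lalgType R) (M : lmodType A).
Local Notation Mr := (restrict_scalars M).

HB.instance Definition _ := GRing.Zmodule.on Mr.

Definition restrict_scale (a : R) (m : Mr) : Mr := a%:A *: (m : M).

Fact restrict_scaleA a b m :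
  restrict_scale a (restrict_scale b m) = restrict_scale (a * b) m.
Proof. by rewrite /restrict_scale scalerA mulr_algl scalerA. Qed.

Fact restrict_scale1 : left_id 1 restrict_scale.
Proof. by move=> m; rewrite /restrict_scale scale1r scale1r. Qed.

Fact restrict_scaleDr : right_distributive restrict_scale +%R.
Proof. by move=> a m1 m2; rewrite /restrict_scale scalerDr. Qed.

Fact restrict_scaleDl m : {morph restrict_scale^~ m : a b / a + b}.
Proof. by move=> a b; rewrite /restrict_scale !scalerDl. Qed.

HB.instance Definition _ := GRing.Zmodule_isLmodule.Build R Mr
  restrict_scaleA restrict_scale1 restrict_scaleDr restrict_scaleDl.

Lemma restrict_scaleE (a : R) (m : M) : a *: (m : Mr) = a%:A *: m.
Proof. by []. Qed.

End RestrictScalars.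

Section Span.
Variables (R : comNzRingType) (V : lmodType R).

Definition lin_indep (e : seq V) : Prop := forall c : nat -> R,
  \sum_(l < size e) c l *: e`_l = 0 -> forall l, (l < size e)%N -> c l = 0.

Definition in_span (e : seq V) (x : V) : Prop :=
  exists c : nat -> R, x = \sum_(l < size e) c l *: e`_l.

Lemma sum_scale_rcons (e : seq V) x (c : nat -> R) :
  \sum_(l < size (rcons e x)) c l *: (rcons e x)`_l =
  \sum_(l < size e) c l *: e`_l + c (size e) *: x.
Proof.
rewrite size_rcons big_ord_recr /= nth_rcons ltnn eqxx; congr (_ + _).
by apply: eq_bigr => l _; rewrite nth_rcons ltn_ord.
Qed.

Lemma in_span0 e : in_span e 0.
Proof. by exists (fun=> 0); rewrite big1 // => l _; rewrite scale0r. Qed.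

Lemma in_spanD e x y : in_span e x -> in_span e y -> in_span e (x + y).
Proof.
move=> [c ->] [d ->]; exists (fun l => c l + d l).
by rewrite -big_split; apply: eq_bigr => l _; rewrite scalerDl.
Qed.

Lemma in_spanZ e a x : in_span e x -> in_span e (a *: x).
Proof.
move=> [c ->]; exists (fun l => a * c l).
by rewrite scaler_sumr; apply: eq_bigr => l _; rewrite scalerA.
Qed.

Lemma in_span_sum e N (F : 'I_N -> V) :
  (forall i, in_span e (F i)) -> in_span e (\sum_(i < N) F i).
Proof.
by move=> F_span; apply: big_ind => //; [apply: in_span0 | apply: in_spanD].
Qed.

Lemma in_span_mem e x : x \in e -> in_span e x.
Proof.
rewrite -index_mem => x_e; exists (fun l => (l == index x e)%:R).
rewrite (bigD1 (Ordinal x_e)) //= eqxx scale1r nth_index -?index_mem //.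
rewrite big1 ?addr0 // => l; rewrite -val_eqE /= => /negbTE ->.
by rewrite scale0r.
Qed.

Lemma in_span_rcons e x y : in_span e y -> in_span (rcons e x) y.
Proof.
move=> [c ->]; pose c' l := if l == size e then 0 else c l.
exists c'; rewrite sum_scale_rcons /c' eqxx scale0r addr0.
by apply: eq_bigr => l _; rewrite ltn_eqF.
Qed.

Lemma in_span_scale_gens e w r y :
  (forall x, x \in w -> in_span e (r *: x)) ->
  in_span w y -> in_span e (r *: y).
Proof.
move=> w_span [c ->]; rewrite scaler_sumr; apply: in_span_sum => l.
by rewrite scalerA mulrC -scalerA; apply/in_spanZ/w_span/mem_nth.
Qed.

Lemma lin_indep_rcons e x : lin_indep e ->
  (forall q, q != 0 -> ~ in_span e (q *: x)) -> lin_indep (rcons e x).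
Proof.
move=> e_indep x_free c; rewrite sum_scale_rcons => c_rel.
have c_last : c (size e) = 0.
  have [// | cx_neq0] := eqVneq (c (size e)) 0.
  case: (x_free _ cx_neq0); exists (fun l => - c l).
  move/eqP: c_rel; rewrite addrC addr_eq0 => /eqP ->.
  by rewrite -sumrN; apply: eq_bigr => l _; rewrite scaleNr.
rewrite c_last scale0r addr0 in c_rel.
move=> l; rewrite size_rcons ltnS leq_eqVlt => /orP[/eqP -> // |].
exact: e_indep c_rel l.
Qed.

End Span.

Lemma exists_indep_scaled_span (R : idomainType) (V : lmodType R) (w : seq V) :
  exists (e : seq V) (r : R),
    [/\ lin_indep e, r != 0 & forall x, x \in w -> in_span e (r *: x)].
Proof.
elim: w => [|x w [e [r [e_indep r_neq0 w_span]]]].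
  by exists [::], 1; split => //; apply: oner_neq0.
have [[q q_neq0 qx_span] | x_free] :=
  classic (exists2 q : R, q != 0 & in_span e (q *: x)).
  exists e, (r * q); split; first exact: e_indep.
    exact: mulf_neq0.
  move=> y; rewrite in_cons => /orP[/eqP -> | y_w].
    by rewrite -scalerA; apply: in_spanZ.
  by rewrite mulrC -scalerA; apply/in_spanZ/w_span.
exists (rcons e x), r; split => //.
  by apply: lin_indep_rcons => // q q_neq0 qx_span; apply: x_free; exists q.
move=> y; rewrite in_cons => /orP[/eqP -> | y_w].
  by apply/in_spanZ/in_span_mem; rewrite mem_rcons mem_head.
exact/in_span_rcons/w_span.
Qed.

Section Coordinates.
Variables (R : comNzRingType) (V : lmodType R) (e : seq V) (r : R).
Hypotheses (e_indep : lin_indep e) (e_span : forall x, in_span e (r *: x)).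

Definition span_coord (x : V) : nat -> R :=
  proj1_sig (constructive_indefinite_description _ (e_span x)).

Lemma span_coordE x : r *: x = \sum_(l < size e) span_coord x l *: e`_l.
Proof. exact: proj2_sig (constructive_indefinite_description _ (e_span x)). Qed.

Lemma span_coord_unique x (c : nat -> R) :
  r *: x = \sum_(l < size e) c l *: e`_l ->
  forall l, (l < size e)%N -> span_coord x l = c l.
Proof.
move=> x_c l l_lt; apply/eqP; rewrite -subr_eq0; apply/eqP.
apply: (e_indep (c := fun l => span_coord x l - c l)) l_lt.
under eq_bigr do rewrite scalerBl.
by rewrite sumrB -span_coordE -x_c subrr.
Qed.

Lemma span_coordD x y l : (l < size e)%N ->
  span_coord (x + y) l = span_coord x l + span_coord y l.
Proof.
apply: (span_coord_unique (c := fun l => span_coord x l + span_coord y l)).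
rewrite scalerDr !span_coordE -big_split.
by apply: eq_bigr => i _; rewrite scalerDl.
Qed.

Lemma span_coordZ a x l : (l < size e)%N ->
  span_coord (a *: x) l = a * span_coord x l.
Proof.
apply: (span_coord_unique (c := fun l => a * span_coord x l)).
rewrite scalerA mulrC -scalerA span_coordE scaler_sumr.
by apply: eq_bigr => i _; rewrite scalerA.
Qed.

End Coordinates.

Section TruncatedPolynomial.
Variables (R : comNzRingType) (k : nat).
Local Notation A := (trunc_poly R k.+1).
Local Notation t := ('qX : A).

Lemma size_trunc_poly (x : A) : (size (val x) <= k.+1)%N.
Proof. by rewrite (leq_trans (size_npoly x)) // mk_monic_Xn size_polyXn. Qed.

Lemma in_trunc_poly_small (p : {poly R}) :
  (size p <= k.+1)%N -> val (in_qpoly _ p : A) = p.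
Proof.
by move=> p_small; apply: in_qpoly_small; rewrite mk_monic_Xn size_polyXn.
Qed.

Lemma trunc_qX_nilpotent : t ^+ k.+1 = 0.
Proof.
apply: val_inj; rewrite /= -rmorphXn /= mk_monic_Xn.
by rewrite Pdiv.RingMonic.rmodpp // monicXn.
Qed.

Lemma trunc_sum_scale_qX (b : nat -> R) :
  \sum_(i < k.+1) b i *: t ^+ i = in_qpoly _ (\poly_(i < k.+1) b i).
Proof.
by rewrite poly_def linear_sum; apply: eq_bigr => i _; rewrite linearZ rmorphXn.
Qed.

Lemma coef_trunc_sum (b : nat -> R) j : (j < k.+1)%N ->
  (val (\sum_(i < k.+1) b i *: t ^+ i))`_j = b j.
Proof.
move=> j_lt; rewrite trunc_sum_scale_qX in_trunc_poly_small ?size_poly //.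
by rewrite coef_poly j_lt.
Qed.

Lemma trunc_poly_expand (x : A) : x = \sum_(i < k.+1) (val x)`_i *: t ^+ i.
Proof.
apply: val_inj; rewrite trunc_sum_scale_qX in_trunc_poly_small ?size_poly //.
by rewrite -/(take_poly _ _) take_poly_id // size_trunc_poly.
Qed.

Section FunctionalLift.
Variables (M : lmodType A) (f : M -> R).
Hypotheses (fD : {morph f : x y / x + y})
           (f_algZ : forall a m, f (a%:A *: m) = a * f m).

Definition lift_functional (m : M) : A :=
  \sum_(i < k.+1) f (t ^+ (k - i) *: m) *: t ^+ i.

Lemma lift_functionalD : {morph lift_functional : x y / x + y}.
Proof.
move=> x y; rewrite -big_split; apply: eq_bigr => i _.
by rewrite scalerDr fD scalerDl.
Qed.

Let f0 : f 0 = 0.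
Proof. by apply: (@addrI _ (f 0)); rewrite -fD !addr0. Qed.

Lemma lift_functional0 : lift_functional 0 = 0.
Proof.
by rewrite /lift_functional big1 // => i _; rewrite scaler0 f0 scale0r.
Qed.

Lemma lift_functional_algZ a m :
  lift_functional (a%:A *: m) = a%:A * lift_functional m.
Proof.
rewrite mulr_algl scaler_sumr; apply: eq_bigr => i _ /=.
by rewrite scalerA mulrC -scalerA f_algZ scalerA.
Qed.

Lemma lift_functional_qXZ m : lift_functional (t *: m) = t * lift_functional m.
Proof.
rewrite /lift_functional mulr_sumr big_ord_recl big_ord_recr /=.
rewrite subn0 scalerA -exprSr trunc_qX_nilpotent scale0r f0 scale0r add0r.
rewrite subnn expr0 scale1r -scalerAr -exprS trunc_qX_nilpotent scaler0 addr0.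
apply: eq_bigr => i _; rewrite /bump leq0n add1n scalerA -exprSr.
by rewrite subnSK // -scalerAr -exprS.
Qed.

Lemma lift_functional_qXnZ j m :
  lift_functional (t ^+ j *: m) = t ^+ j * lift_functional m.
Proof.
elim: j => [|j IHj]; first by rewrite expr0 scale1r mul1r.
by rewrite exprS -scalerA lift_functional_qXZ IHj mulrA.
Qed.

Lemma lift_functional_sum N (F : 'I_N -> M) :
  lift_functional (\sum_(i < N) F i) = \sum_(i < N) lift_functional (F i).
Proof. exact: (big_morph _ lift_functionalD lift_functional0). Qed.

Lemma lift_functionalZ x m :
  lift_functional (x *: m) = x * lift_functional m.
Proof.
rewrite {1}(trunc_poly_expand x) scaler_suml lift_functional_sum.
rewrite [in RHS](trunc_poly_expand x) mulr_suml; apply: eq_bigr => i _.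
by rewrite -mulr_algl -scalerA lift_functional_algZ lift_functional_qXnZ mulrA.
Qed.

Lemma coef_lift_functional m : (val (lift_functional m))`_k = f m.
Proof.
rewrite (coef_trunc_sum (fun i => f (t ^+ (k - i) *: m))) //.
by rewrite subnn expr0 scale1r.
Qed.

End FunctionalLift.

End TruncatedPolynomial.

Lemma qpoly_alg_non_zero_divisor (R : idomainType) (h : {poly R}) (r : R) :
  r != 0 -> non_zero_divisor (r%:A : {poly %/ h}).
Proof.
move=> r_neq0 x; rewrite mulr_algl => /(congr1 val) /= /eqP.
by rewrite scale_poly_eq0 (negbTE r_neq0) => /eqP x0; apply: val_inj.
Qed.

Lemma restrict_scalars_finite (R : comNzRingType) (k : nat)
    (M : lmodType (trunc_poly R k.+1)) :
  finite_type M -> exists w : seq (restrict_scalars M), forall m, in_span w m.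
Proof.
move=> [s s_gen]; exists [seq 'qX ^+ j *: y | y <- s, j <- iota 0 k.+1] => m.
have [c ->] := s_gen m; apply: in_span_sum => i.
rewrite (trunc_poly_expand (c i)) scaler_suml; apply: in_span_sum => j.
rewrite -mulr_algl -scalerA -restrict_scaleE; apply: in_spanZ.
apply/in_span_mem/allpairs_f; first exact: mem_nth.
by rewrite (mem_iota 0) add0n ltn_ord.
Qed.

Section Embedding.
Variables (R : idomainType) (k : nat) (M : lmodType (trunc_poly R k.+1)).
Variables (e : seq (restrict_scalars M)) (r : R).
Hypotheses (e_indep : lin_indep e) (e_span : forall x, in_span e (r *: x)).

Let coordD l : (l < size e)%N ->
  {morph (fun x : M => span_coord e_span x l) : x y / x + y}.
Proof. by move=> l_lt x y; apply: span_coordD. Qed.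

Let coord_algZ l : (l < size e)%N ->
  forall a (x : M), span_coord e_span (a%:A *: x) l = a * span_coord e_span x l.
Proof. by move=> l_lt a x; apply: span_coordZ. Qed.

Definition span_embedding (m : M) : 'rV[trunc_poly R k.+1]_(size e) :=
  \row_(l < size e) lift_functional (fun x => span_coord e_span x l) m.

Lemma span_embedding_linear : linear span_embedding.
Proof.
move=> a m1 m2; apply/rowP => l; rewrite !mxE.
have [cD cZ] := (coordD (ltn_ord l), coord_algZ (ltn_ord l)).
by rewrite lift_functionalD // lift_functionalZ.
Qed.

Lemma span_embedding_inj : torsion_free M -> r != 0 -> injective span_embedding.
Proof.
move=> M_tf r_neq0 m1 m2 /rowP embed_eq.
have coord_eq l : (l < size e)%N ->
    span_coord e_span m1 l = span_coord e_span m2 l.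
  move=> l_lt; have := embed_eq (Ordinal l_lt).
  move/(congr1 (fun x : trunc_poly R k.+1 => (val x)`_k)).
  by rewrite /= !mxE !coef_lift_functional.
apply/eqP; rewrite -subr_eq0; apply/eqP.
apply: (M_tf r%:A); first exact: qpoly_alg_non_zero_divisor.
rewrite scalerBr -!restrict_scaleE !(span_coordE e_span).
by under eq_bigr => l _ do rewrite coord_eq //; rewrite subrr.
Qed.

End Embedding.

Theorem proposition3p4p1 (R : idomainType) (n : nat) (M : lmodType (trunc_poly R n)) :
  noetherian R -> (1 <= n)%N -> finite_type M ->
  (torsion_free M <-> embeds_in_free M).
Proof.
move: M; case: n => [|k] M _ // _ M_fin.
split=> [M_tf|]; last exact: embeds_in_free_torsion_free.
have [w w_span] := restrict_scalars_finite M_fin.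
have [e [r [e_indep r_neq0 w_r_span]]] := exists_indep_scaled_span w.
have e_span x : in_span e (r *: x) := in_span_scale_gens w_r_span (w_span x).
exists _, (span_embedding e_span); split.
- exact: free_rV.
- exact: span_embedding_linear.
- exact: span_embedding_inj.
Qed.
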